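(* Consider two-value instances, i.e. instances in which every interval has length either $k/\Delta$ (short) or $k$ (long). Let $\textsc{Alg}$ be any deterministic online algorithm that receives the full prediction $\hat{\mathbf{I}}$. If there is $\epsilon>0$ such that for every two-value instance $\mathcal{I}$ and every prediction, $|\textsc{Opt}(\mathcal{I})| \le \Delta\cdot|\textsc{Alg}(\mathcal{I})| + \frac{k}{\Delta} - \epsilon$, then there is a two-value instance $\mathcal{I}$ whose prediction $\hat{\mathbf{I}}$ is accurate and on which $|\textsc{Opt}(\mathcal{I})| \ge \Delta\cdot|\textsc{Alg}(\mathcal{I})|$; that is, $\textsc{Alg}$ cannot be better than $\Delta$-consistent.
   Context: Online interval scheduling: intervals $I_j$ with release time $r_j$, deadline $d_j$, length $l_j=d_j-r_j$ arrive online in non-decreasing order of release time; each must be irrevocably accepted or rejected upon arrival; accepted intervals must be pairwise non-overlapping; objective: maximize the total accepted length $|\cdot|$. $\textsc{Opt}(\mathcal{I})$ is an optimal offline solution. $k=\max_j l_j$, $\Delta=k/\min_j l_j$. The full prediction $\hat{\mathbf{I}}=\{(\hat r_1,\hat d_1),\dots,(\hat r_n,\hat d_n)\}$ gives a predicted release time and deadline for every interval and is available to the algorithm in advance; it is accurate if it coincides with the actual instance. An algorithm is $\alpha$-consistent if $|\textsc{Opt}(\mathcal{I})|\le\alpha|\textsc{Alg}(\mathcal{I})|$ on all instances with accurate predictions. *)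

From HB Require Import structures.
From mathcomp Require Import all_boot all_order all_algebra.
From mathcomp Require Import reals.
Set Implicit Arguments. Unset Strict Implicit. Unset Printing Implicit Defensive.
Import Order.TTheory GRing.Theory Num.Theory.
Local Open Scope ring_scope.

Section IntervalScheduling.
Variable R : realType.

(* An interval is a pair (release time r, deadline d). *)
Definition ilen (I : R * R) : R := I.2 - I.1.

Definition idisj (I J : R * R) : bool := (I.2 <= J.1) || (J.2 <= I.1).

Definition release_sorted (s : seq (R * R)) : bool :=
  sorted (fun I J : R * R => I.1 <= J.1) s.

Definition two_value (k Delta : R) (s : seq (R * R)) : bool :=
  all (fun I => (ilen I == k / Delta) || (ilen I == k)) s.

(* A deterministic online algorithm with full prediction: given the
   prediction (known in advance) and the sequence of intervals revealed so
   far (the last one being the current interval), it decides to accept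
   (true) or reject (false) the current interval. Its decisions are
   irrevocable. An acceptance that would overlap an already accepted
   interval is not executed (equivalently: algorithms are feasible). *)
Definition online_alg := seq (R * R) -> seq (R * R) -> bool.

Fixpoint run_aux (alg : online_alg) (pred past acc rest : seq (R * R))
  : seq (R * R) :=
  match rest with
  | [::] => acc
  | J :: rest' =>
      let hist := rcons past J in
      let acc' := if alg pred hist && all (idisj J) acc then rcons acc J
                  else acc in
      run_aux alg pred hist acc' rest'
  end.

Definition alg_accepted (alg : online_alg) (pred inst : seq (R * R)) :=
  run_aux alg pred [::] [::] inst.

Definition alg_value (alg : online_alg) (pred inst : seq (R * R)) : R :=
  \sum_(I <- alg_accepted alg pred inst) ilen I.

Definition feasible_set (inst : seq (R * R)) (A : {set 'I_(size inst)}) : bool :=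
  [forall i in A, forall j in A,
     (i != j) ==> idisj (nth (0, 0) inst i) (nth (0, 0) inst j)].

Definition opt_value (inst : seq (R * R)) : R :=
  \big[Num.max/0]_(A : {set 'I_(size inst)} | feasible_set A)
     \sum_(i in A) ilen (nth (0, 0) inst i).

End IntervalScheduling.

From mathcomp Require Import all_boot all_order all_algebra.
From mathcomp Require Import reals.
From mathcomp Require Import lra zify.
Import Order.TTheory GRing.Theory Num.Theory.
Set Implicit Arguments. Unset Strict Implicit.
Local Open Scope ring_scope.

(* Short intervals of length h = k/Delta are released at times 0, k, 2k, ...,
   and the prediction is the instance in which short 0 is followed by long
   intervals [0, k] overlapping it.  As long as only shorts have arrived, the
   algorithm cannot tell the instances below apart; let j be the first short it
   accepts.  If j = 0, the prediction is accurate, |Alg| = h and |Opt| >= k =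
   Delta h.  If 0 < j, replace the rest of the instance by copies of a long
   interval overlapping short j: |Alg| = h but short 0 and that long interval
   give |Opt| >= h + k.  If none of the first n - 1 shorts is accepted, n shorts
   give |Alg| <= h and |Opt| >= n h >= h + k once n > Delta + 1.  Both contradict
   |Opt| <= Delta |Alg| + h - eps.  All instances are padded to the same size n,
   so that the prediction stays admissible. *)

Lemma idisjC (R : realType) (I J : R * R) : idisj I J = idisj J I.
Proof. exact: orbC. Qed.

Lemma run_aux_cat (R : realType) (alg : online_alg R) pred past acc s t :
  run_aux alg pred past acc (s ++ t) =
  run_aux alg pred (past ++ s) (run_aux alg pred past acc s) t.
Proof.
elim: s past acc => [|J s IHs] past acc /=; first by rewrite cats0.
by rewrite IHs cat_rcons.
Qed.

Lemma alg_accepted_rcons (R : realType) (alg : online_alg R) pred s J :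
  alg_accepted alg pred (rcons s J) =
  let acc := alg_accepted alg pred s in
  if alg pred (rcons s J) && all (idisj J) acc then rcons acc J else acc.
Proof. by rewrite /alg_accepted -cats1 run_aux_cat /= cats1. Qed.

Lemma run_aux_nseq_blocked (R : realType) (alg : online_alg R) pred past acc J m :
  ~~ all (idisj J) acc -> run_aux alg pred past acc (nseq m J) = acc.
Proof.
move=> blocked; elim: m past => [|m IHm] past //=.
by rewrite (negbTE blocked) andbF IHm.
Qed.

Lemma opt_value_ge (R : realType) (inst : seq (R * R)) (A : {set 'I_(size inst)}) :
  {in A &, forall i j : 'I_(size inst),
     (i < j)%N -> idisj (nth (0, 0) inst i) (nth (0, 0) inst j)} ->
  \sum_(i in A) ilen (nth (0, 0) inst i) <= opt_value inst.
Proof.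
move=> disjA; apply: (le_bigmax_cond _ (fun B : {set 'I_(size inst)} =>
  \sum_(i in B) ilen (nth (0, 0) inst i))).
apply/forallP => i; apply/implyP => iA; apply/forallP => j; apply/implyP => jA.
apply/implyP; case: (ltngtP i j) => [ij _|ji _|/val_inj ->]; last by rewrite eqxx.
- exact: disjA.
- by rewrite idisjC; apply: disjA.
Qed.

Lemma opt_value_ge_nth (R : realType) (inst : seq (R * R)) i :
  (i < size inst)%N -> ilen (nth (0, 0) inst i) <= opt_value inst.
Proof.
move=> lt_i; have := @opt_value_ge R inst [set Ordinal lt_i].
by rewrite big_set1; apply=> a b /set1P -> /set1P ->; rewrite ltnn.
Qed.

Lemma opt_value_ge_nth2 (R : realType) (inst : seq (R * R)) i j :
  (i < j)%N -> (j < size inst)%N ->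
  idisj (nth (0, 0) inst i) (nth (0, 0) inst j) ->
  ilen (nth (0, 0) inst i) + ilen (nth (0, 0) inst j) <= opt_value inst.
Proof.
move=> ij lt_j disj_ij; have lt_i := ltn_trans ij lt_j.
have i_notin : Ordinal lt_i \notin [set Ordinal lt_j].
  by rewrite in_set1 -val_eqE /= ltn_eqF.
have := @opt_value_ge R inst (Ordinal lt_i |: [set Ordinal lt_j]).
rewrite big_setU1 //= big_set1; apply=> a b.
by rewrite !inE => /orP[]/eqP-> /orP[]/eqP-> //=; rewrite ?ltnn // ltnNge ltnW.
Qed.

Lemma first_or_none (p : pred nat) N :
  (forall i, (i < N)%N -> ~~ p i) \/
  exists j, [/\ (j < N)%N, p j & forall i, (i < j)%N -> ~~ p i].
Proof.
elim: N => [|N [none|[j [lt_j pj before]]]]; first by left.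
- case pN: (p N); first by right; exists N.
  by left=> i; rewrite ltnS leq_eqVlt => /orP[/eqP->|/none]; rewrite ?pN.
- by right; exists j; split=> //; apply: ltnW.
Qed.

Section Adversary.
Variables (R : realType) (k h : R).
Hypotheses (h_gt0 : 0 < h) (h_le_k : h <= k).

Let k_gt0 : 0 < k := lt_le_trans h_gt0 h_le_k.

Definition short_iv (i : nat) : R * R := (k * i%:R, k * i%:R + h).
Definition long_iv (i : nat) : R * R := (k * i%:R, k * i%:R + k).
Definition shorts (n : nat) : seq (R * R) := mkseq short_iv n.
Definition adversary (n j : nat) : seq (R * R) :=
  shorts j.+1 ++ nseq (n - j.+1) (long_iv j).

Lemma ilen_short i : ilen (short_iv i) = h.
Proof. by rewrite /ilen /= addrAC subrr add0r. Qed.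

Lemma ilen_long i : ilen (long_iv i) = k.
Proof. by rewrite /ilen /= addrAC subrr add0r. Qed.

Lemma ler_start i j : (i <= j)%N -> k * i%:R <= k * j%:R.
Proof. by move=> ij; apply: ler_wpM2l; [exact: ltW | rewrite ler_nat]. Qed.

Lemma short_long_overlap i : ~~ idisj (short_iv i) (long_iv i).
Proof. by rewrite /idisj /= negb_or -!ltNge !ltrDl h_gt0 k_gt0. Qed.

Lemma short_disj_lt i j : (i < j)%N -> idisj (short_iv i) (short_iv j).
Proof.
move=> ij; apply/orP; left; apply: le_trans (ler_start ij).
by rewrite /= -natr1 mulrDr mulr1 lerD2l.
Qed.

Lemma short0_disj_long j : (0 < j)%N -> idisj (short_iv 0) (long_iv j).
Proof.
move=> j_gt0; apply/orP; left; rewrite /= mulr0 add0r.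
by apply: le_trans h_le_k _; rewrite -[leLHS]mulr1; exact: ler_start j_gt0.
Qed.

Lemma size_adversary n j : (j < n)%N -> size (adversary n j) = n.
Proof. by move=> jn; rewrite size_cat size_mkseq size_nseq subnKC. Qed.

Lemma nth_adversary n j i : (i < n)%N ->
  nth (0, 0) (adversary n j) i = if (i <= j)%N then short_iv i else long_iv j.
Proof.
move=> lt_i; rewrite nth_cat size_mkseq ltnS; case: leqP => ij.
  by rewrite nth_mkseq.
by rewrite nth_nseq ifT //; lia.
Qed.

Lemma adversary_shorts n : (0 < n)%N -> adversary n n.-1 = shorts n.
Proof. by move=> n_gt0; rewrite /adversary prednK // subnn cats0. Qed.

Lemma adversary_sorted n j : (j < n)%N -> release_sorted (adversary n j).
Proof.
move=> jn; apply/(sortedP (0, 0)) => i; rewrite size_adversary // => lt_i.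
rewrite !nth_adversary //; last exact: ltnW.
by case: ifP; case: ifP => /= *; apply: ler_start; lia.
Qed.

Lemma adversary_two_value Delta n j :
  h = k / Delta -> two_value k Delta (adversary n j).
Proof.
move=> hE; apply/allP => I; rewrite mem_cat => /orP[/mapP[i _ ->]|/nseqP[-> _]].
- by rewrite ilen_short hE eqxx.
- by rewrite ilen_long eqxx orbT.
Qed.

Lemma opt_shorts n : n%:R * h <= opt_value (shorts n).
Proof.
have := @opt_value_ge R (shorts n) setT.
have sizeE : size (shorts n) = n by rewrite size_mkseq.
rewrite (eq_bigr (fun=> h)) ?sumr_const ?cardsT ?card_ord ?sizeE ?mulr_natl.
  apply=> a b _ _ ab; rewrite /shorts !nth_mkseq -?sizeE //.
  exact: short_disj_lt.
by move=> i _; rewrite /shorts nth_mkseq -?sizeE // ilen_short.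
Qed.

Lemma opt_adversary_long n j : (j.+1 < n)%N -> k <= opt_value (adversary n j).
Proof.
move=> lt_j; have jn := ltnW lt_j.
have := @opt_value_ge_nth R (adversary n j) j.+1.
by rewrite size_adversary // nth_adversary // ltnn ilen_long; apply.
Qed.

Lemma opt_adversary_short_long n j : (0 < j)%N -> (j.+1 < n)%N ->
  h + k <= opt_value (adversary n j).
Proof.
move=> j_gt0 lt_j; have jn := ltnW lt_j; have n_gt0 := ltn_trans j_gt0 jn.
have := @opt_value_ge_nth2 R (adversary n j) 0 j.+1.
rewrite size_adversary // !nth_adversary // leq0n ltnn ilen_short ilen_long.
by apply=> //; apply: short0_disj_long.
Qed.

Variables (alg : online_alg R) (P : seq (R * R)).

Lemma accepted_shorts_nil j : (forall i, (i < j)%N -> ~~ alg P (shorts i.+1)) ->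
  alg_accepted alg P (shorts j) = [::].
Proof.
elim: j => [//|j IHj] reject.
rewrite /shorts mkseqS alg_accepted_rcons -mkseqS IHj => [|i ij]; last first.
  by apply: reject; apply: ltnW.
by rewrite (negbTE (reject j _)).
Qed.

Lemma accepted_shorts_first j :
  (forall i, (i < j)%N -> ~~ alg P (shorts i.+1)) -> alg P (shorts j.+1) ->
  alg_accepted alg P (shorts j.+1) = [:: short_iv j].
Proof.
move=> reject accept.
by rewrite {1}/shorts mkseqS alg_accepted_rcons -mkseqS accepted_shorts_nil // accept.
Qed.

Lemma alg_value_shorts_le j : (forall i, (i < j)%N -> ~~ alg P (shorts i.+1)) ->
  alg_value alg P (shorts j.+1) <= h.
Proof.
move=> reject; rewrite /alg_value.
rewrite {1}/shorts mkseqS alg_accepted_rcons -mkseqS accepted_shorts_nil //=.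
by case: ifP => _; rewrite ?big_seq1 ?big_nil ?ilen_short // ltW.
Qed.

Lemma alg_value_adversary n j : (j < n)%N ->
  (forall i, (i < j)%N -> ~~ alg P (shorts i.+1)) -> alg P (shorts j.+1) ->
  alg_value alg P (adversary n j) = h.
Proof.
move=> jn reject accept; have := accepted_shorts_first reject accept.
rewrite /alg_value /alg_accepted /adversary run_aux_cat => -> /=.
rewrite run_aux_nseq_blocked.
  by rewrite big_seq1 ilen_short.
by rewrite /= andbT idisjC; exact: short_long_overlap.
Qed.

End Adversary.

Theorem mainTheorem4 (R : realType) (k Delta : R) (alg : online_alg R) :
  0 < k -> 1 < Delta ->
  (exists2 eps : R, 0 < eps &
     forall inst pred : seq (R * R),
       release_sorted inst -> two_value k Delta inst ->
       size pred = size inst ->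
       opt_value inst <= Delta * alg_value alg pred inst + k / Delta - eps) ->
  exists inst : seq (R * R),
    [/\ inst != [::], release_sorted inst, two_value k Delta inst &
        Delta * alg_value alg inst inst <= opt_value inst].
Proof.
move=> k_gt0 Delta_gt1 [eps eps_gt0 bound].
have Delta_gt0 : 0 < Delta := lt_trans ltr01 Delta_gt1.
set h := k / Delta.
have kE : k = Delta * h by rewrite /h mulrC divfK // gt_eqF.
have h_gt0 : 0 < h by rewrite divr_gt0.
have h_le_k : h <= k by rewrite kE; nra.
pose m := Num.truncn Delta.
have Delta_lt : Delta < m.+1%:R := truncnS_gt Delta.
pose P := adversary k h m.+2 0.
have no_bad_instance j : (j < m.+2)%N ->
    alg_value alg P (adversary k h m.+2 j) <= h ->
    h + k <= opt_value (adversary k h m.+2 j) -> False.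
  move=> jn cheap rich; have := ler_wpM2l (ltW Delta_gt0) cheap.
  have := bound _ P (adversary_sorted h_gt0 h_le_k jn) (adversary_two_value _ _ erefl).
  by rewrite !size_adversary // -kE -/h => /(_ erefl); lra.
case: (first_or_none (fun i => alg P (shorts k h i.+1)) m.+1) => [reject|].
  exfalso; apply: (no_bad_instance m.+1) => //; rewrite adversary_shorts //.
    exact: alg_value_shorts_le.
  have := opt_shorts h_gt0 h_le_k m.+2; have := ler_wpM2r (ltW h_gt0) (ltW Delta_lt).
  by rewrite -kE -natr1 mulrDl mul1r; lra.
move=> [[|j] [jm accept reject]].
  exists P; split=> //; first exact: adversary_sorted.
    exact: adversary_two_value.
  by rewrite (alg_value_adversary h_gt0 h_le_k) // -kE opt_adversary_long.
exfalso; apply: (no_bad_instance j.+1 (ltn_trans jm _)) => //.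
  by rewrite (alg_value_adversary h_gt0 h_le_k) // ltnW.
exact: opt_adversary_short_long.
Qed.
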